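(* Let $\mathcal{G}=(\mathcal{V},\mathcal{E})$ be a strongly connected digraph with $n$ nodes $v_1,\dots,v_n$, where node $v_j$ has out-degree $d_j^+$ and arbitrary initial value $x_j[0]\in\mathbb{R}$, and $y_j[0]=1$. Consider the ARQ-based Ratio Consensus iteration written in augmented form $$\tilde{x}[k+1]=\Xi[k]\,\tilde{x}[k],\qquad \tilde{y}[k+1]=\Xi[k]\,\tilde{y}[k],\qquad k=0,1,2,\dots,$$ where $\tilde x[k],\tilde y[k]\in\mathbb{R}^{\tilde n}$, $\tilde n\ge n$, the first $n$ coordinates correspond to the actual nodes and are initialized as $\tilde x_j[0]=x_j[0]$, $\tilde y_j[0]=1$ for $j=1,\dots,n$, while all remaining (virtual-node) coordinates are initialized to $0$. Assume the random matrices $\Xi[k]$ satisfy the standing assumptions (A1)–(A3) below. For each actual node $v_j$ let $\mathcal{K}_j=\{k\ge 0:\ \tilde y_j[k]\ge c^{\lambda}\}$ and, for $k\in\mathcal{K}_j$, let $z_j[k]=\tilde x_j[k]/\tilde y_j[k]$. Then, with probability $1$, for every $v_j\in\mathcal{V}$ the set $\mathcal{K}_j$ is infinite and $$\lim_{k\to\infty,\ k\in\mathcal{K}_j} z_j[k]=\frac{1}{n}\sum_{i=1}^{n}x_i[0].$$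
   Context: Model: the augmented digraph adds, for each edge $(v_j,v_i)\in\mathcal{E}$ (meaning $v_j$ receives from $v_i$), $\bar\tau$ virtual ''delay'' nodes (holding information that will arrive at $v_j$ after $r=1,\dots,\bar\tau$ steps, where $\bar\tau$ is the ARQ retransmission limit and upper bound on delays) and one virtual ''buffer'' node (holding mass lost due to packet drops, released later), so $\tilde n=|\mathcal{E}|(\bar\tau+1)+n$. The weights used by node $v_j$ on its out-going links and self-loop are $p_{lj}=1/(1+d_j^+)$ for $v_l\in\mathcal{N}_j^+\cup\{v_j\}$ and $0$ otherwise. Standing assumptions on the random matrices $\Xi[k]\in\mathbb{R}_+^{\tilde n\times\tilde n}$, which encode the realized retransmission delays and packet drops at step $k$: (A1) Each $\Xi[k]$ takes values in a fixed finite set $\mathcal{X}$ of nonnegative column-stochastic $\tilde n\times\tilde n$ matrices, every entry of which is $0$, $1$, or $1/(1+d_j^+)$ for some $j$; hence every positive entry is at least $c:=\min_{j}1/(1+d_j^+)$. (A2) There exist a positive integer $\lambda$, matrices $\Xi_1,\dots,\Xi_\lambda\in\mathcal{X}$ and a constant $p_{\min}>0$ such that the product $L=\Xi_\lambda\Xi_{\lambda-1}\cdots\Xi_1$ satisfies $L(j,i)>0$ for every $j\in\{1,\dots,n\}$ and every $i\in\{1,\dots,\tilde n\}$ (all entries in the rows of the actual nodes are strictly positive). (A3) For every $k\ge 0$, conditionally on the past realizations $\Xi[0],\dots,\Xi[k]$, the event $\{\Xi[k+1]=\Xi_1,\ \Xi[k+2]=\Xi_2,\dots,\Xi[k+\lambda]=\Xi_\lambda\}$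 has probability at least $p_{\min}$. *)

From HB Require Import structures.
From mathcomp Require Import all_boot all_order all_algebra.
From mathcomp Require Import all_classical all_reals all_analysis.
Set Implicit Arguments. Unset Strict Implicit. Unset Printing Implicit Defensive.
Import Order.TTheory GRing.Theory Num.Theory.
Local Open Scope ring_scope.

(* Digraph on nodes 'I_n : [e j i] means (v_j, v_i) \in E, i.e. v_j receives from v_i. *)

Definition outdeg (n : nat) (e : rel 'I_n) (j : 'I_n) : nat := #|[set l | e l j]|.

Definition strongly_connected (n : nat) (e : rel 'I_n) : Prop :=
  forall i j : 'I_n, connect e i j.

Definition simple_digraph (n : nat) (e : rel 'I_n) : Prop := irreflexive e.

Definition cmin (R : realType) (n : nat) (e : rel 'I_n) : R :=
  \big[Num.min/1]_(j < n) (1 + (outdeg e j)%:R)^-1.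

Definition col_stochastic (R : realType) (N : nat) (M : 'M[R]_N) : Prop :=
  (forall i j, 0 <= M i j) /\ (forall j, \sum_i M i j = 1).

Definition entries_ok (R : realType) (n : nat) (e : rel 'I_n) (N : nat)
  (M : 'M[R]_N) : Prop :=
  forall a b, M a b = 0 \/ M a b = 1 \/ exists j : 'I_n, M a b = (1 + (outdeg e j)%:R)^-1.

(* lprod [:: A1; ...; Al] = Al *m ... *m A1 *)
Fixpoint lprod (R : realType) (N : nat) (s : seq 'M[R]_N) : 'M[R]_N :=
  match s with
  | [::] => 1%:M
  | A :: s' => lprod s' *m A
  end.

Fixpoint traj (T : Type) (R : realType) (N : nat) (Xi : nat -> T -> 'M[R]_N)
  (v0 : 'cV[R]_N) (k : nat) (w : T) : 'cV[R]_N :=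
  match k with
  | 0 => v0
  | k'.+1 => Xi k' w *m traj Xi v0 k' w
  end.

(* Write A t for the realized matrix Xi[t] and mprod A a b for the transition
   matrix from time a to a + b, so that x~[k] = mprod A 0 k x~[0] and likewise
   for y~.

   Deterministic half: all factors are column stochastic, and the pattern
   product L = Xi_lam ... Xi_1 of (A2) has every entry of the rows of the actual
   nodes at least beta = c ^+ lam (entries of a product are 0 or at least the
   product of the entry lower bounds).  Right multiplication by a column
   stochastic matrix keeps the entries of a row vector in their range, and by L
   shrinks that range by the factor 1 - beta.  Hence, if the pattern occurs
   after every time, the rows of mprod A 0 k restricted to the actual nodes
   become asymptotically constant; since the x0 i - avg sum to zero, this gives
   x~_j - avg y~_j -> 0, and dividing by y~_j >= beta gives the limit along K_j.
   Right after each occurrence of the pattern y~_j >= beta n >= beta, so K_j is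
   infinite.

   Probabilistic half: by (A3), any event determined by the history up to time
   k keeps a fraction pmin of its probability on the pattern window at k (split
   the event along the finitely many values of the history).  Iterating over
   disjoint windows, missing M of them has probability at most (1 - pmin) ^+ M,
   so almost surely the pattern occurs after every time. *)

From HB Require Import structures.
From mathcomp Require Import all_boot all_order all_algebra.
From mathcomp Require Import all_classical all_reals all_analysis.
From mathcomp Require Import ring lra zify.
Import Order.TTheory GRing.Theory Num.Theory.
Local Open Scope ring_scope.

Set Implicit Arguments. Unset Strict Implicit. Unset Printing Implicit Defensive.

Section MatrixProducts.
Variables (R : realType) (N : nat).
Implicit Types (A : nat -> 'M[R]_N) (M L : 'M[R]_N).

Fixpoint mprod A (a b : nat) : 'M[R]_N :=
  if b is b'.+1 then A (a + b')%N *m mprod A a b' else 1%:M.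

Lemma mprodD A a b c : mprod A a (b + c) = mprod A (a + b) c *m mprod A a b.
Proof.
elim: c => [|c IH]; first by rewrite addn0 /= mul1mx.
by rewrite addnS /= IH mulmxA addnA.
Qed.

Lemma traj_mprod (T : Type) (Xi : nat -> T -> 'M[R]_N) v0 k w :
  traj Xi v0 k w = mprod (Xi^~ w) 0 k *m v0.
Proof. by elim: k => [|k IH] /=; rewrite ?mul1mx // IH mulmxA add0n. Qed.

Lemma lprod_mprod A s a :
  (forall r, (r < size s)%N -> A (a + r)%N = nth 0 s r) ->
  lprod s = mprod A a (size s).
Proof.
elim: s a => [|M s IH] a As //.
rewrite (_ : size (M :: s) = 1 + size s)%N // mprodD /= (IH (a + 1)%N) => [|r Hr].
  by rewrite mulmx1 (As 0%N).
by rewrite -addnA add1n (As r.+1).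
Qed.

Lemma col_stochastic1 : col_stochastic (1%:M : 'M[R]_N).
Proof.
split=> [i j|j]; first by rewrite mxE ler0n.
rewrite (bigD1 j) //= big1 ?mxE ?eqxx ?addr0 // => i /negbTE Hi.
by rewrite mxE Hi.
Qed.

Lemma col_stochastic_mul M L :
  col_stochastic M -> col_stochastic L -> col_stochastic (M *m L).
Proof.
move=> [M0 M1] [L0 L1]; split=> [i j|j].
  by rewrite mxE; apply: sumr_ge0 => l _; apply: mulr_ge0.
under eq_bigr do rewrite mxE.
rewrite exchange_big /= -(L1 j); apply: eq_bigr => l _.
by rewrite -mulr_suml M1 mul1r.
Qed.

Lemma col_stochastic_mprod A a b :
  (forall t, col_stochastic (A t)) -> col_stochastic (mprod A a b).
Proof.
move=> As; elim: b => [|b IH] /=; first exact: col_stochastic1.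
exact: col_stochastic_mul.
Qed.

Lemma col_stochastic_mass M (v : 'cV[R]_N) :
  col_stochastic M -> \sum_i (M *m v) i 0 = \sum_i v i 0.
Proof.
move=> [_ M1]; under eq_bigr do rewrite mxE.
rewrite exchange_big /=; apply: eq_bigr => l _.
by rewrite -mulr_suml M1 mul1r.
Qed.

Lemma row_lb_mass M (v : 'cV[R]_N) (beta : R) j :
  (forall i, beta <= M j i) -> (forall i, 0 <= v i 0) ->
  beta * \sum_i v i 0 <= (M *m v) j 0.
Proof.
move=> Mb v0; rewrite mulr_sumr mxE.
by apply: ler_sum => i _; apply: ler_wpM2r.
Qed.

Definition entries_lb M (x : R) := forall i j, M i j = 0 \/ x <= M i j.

Lemma entries_lb_mul M L x y :
  col_stochastic M -> col_stochastic L -> 0 <= x ->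
  entries_lb M x -> entries_lb L y -> entries_lb (M *m L) (x * y).
Proof.
move=> [M0 _] [L0 _] x0 Mx Ly i j; rewrite mxE.
have [/existsP [l Hl]|Hn] := boolP [exists l, M i l * L l j != 0]; last first.
  left; apply: big1 => l _; apply/eqP; apply: contraNT Hn => Hl.
  by apply/existsP; exists l.
right; rewrite (bigD1 l) //=.
have xyl : x * y <= M i l * L l j.
  move: Hl; case: (Mx i l) => [->|Mil]; first by rewrite mul0r eqxx.
  case: (Ly l j) => [->|Llj]; first by rewrite mulr0 eqxx.
  by move=> _; apply: le_trans (ler_wpM2l x0 Llj) (ler_wpM2r (L0 l j) Mil).
apply: le_trans xyl _; rewrite lerDl.
by apply: sumr_ge0 => k _; apply: mulr_ge0.
Qed.

Lemma entries_lb_lprod s (c : R) :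
  0 <= c -> (forall M, M \in s -> col_stochastic M /\ entries_lb M c) ->
  col_stochastic (lprod s) /\ entries_lb (lprod s) (c ^+ size s).
Proof.
move=> c0; elim: s => [|M s IH] sc /=.
  split=> [|i j]; first exact: col_stochastic1.
  by rewrite mxE expr0; case: eqP => _; [right|left].
have [scs sc'] := IH (fun M' HM' => sc M' (mem_behead (s := M :: s) HM')).
have [Mcs Mc] := sc M (mem_head _ _).
split; first exact: col_stochastic_mul.
by rewrite exprSr; apply: entries_lb_mul => //; apply: exprn_ge0.
Qed.

End MatrixProducts.

Section RangeContraction.
Variables (R : realType) (N : nat).
Implicit Types (u : 'rV[R]_N) (M L : 'M[R]_N) (a b beta : R).

Definition row_in u a b := forall i, a <= u 0 i <= b.

Lemma row_mul_shift M u a i :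
  \sum_l M l i = 1 -> (u *m M) 0 i = a + \sum_l (u 0 l - a) * M l i.
Proof.
move=> M1; rewrite mxE.
under [X in _ = _ + X]eq_bigr do rewrite mulrBl.
by rewrite sumrB -mulr_sumr M1 mulr1 addrC subrK.
Qed.

(* Right multiplication by a column-stochastic matrix averages the entries
   of a row vector, so it keeps them in the same interval. *)
Lemma row_in_mul M u a b :
  col_stochastic M -> row_in u a b -> row_in (u *m M) a b.
Proof.
move=> [M0 M1] uab i; rewrite (row_mul_shift _ a (M1 i)); apply/andP; split.
  rewrite lerDl; apply: sumr_ge0 => l _; apply: mulr_ge0 => //.
  by have /andP[? _] := uab l; rewrite subr_ge0.
have -> : b = a + \sum_l (b - a) * M l i.
  by rewrite -mulr_sumr M1 mulr1 addrC subrK.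
rewrite lerD2l; apply: ler_sum => l _; apply: ler_wpM2r => //.
by have /andP[_ ?] := uab l; rewrite lerB.
Qed.

(* If a whole row j0 of L is at least beta, every entry of u *m L puts weight
   at least beta on u_j0, so the interval [a, b] shrinks by the factor
   1 - beta around beta * u_j0. *)
Lemma row_in_contract L u a b beta j0 :
  col_stochastic L -> (forall i, beta <= L j0 i) -> row_in u a b ->
  row_in (u *m L) (beta * u 0 j0 + (1 - beta) * a)
                  (beta * u 0 j0 + (1 - beta) * b).
Proof.
move=> [L0 L1] Lb uab i; have /andP[ua ub] := uab j0; apply/andP; split.
  rewrite (row_mul_shift _ a (L1 i)) (bigD1 j0) //=.
  have : 0 <= \sum_(l | l != j0) (u 0 l - a) * L l i.
    apply: sumr_ge0 => l _; apply: mulr_ge0 => //.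
    by have /andP[? _] := uab l; rewrite subr_ge0.
  have : (u 0 j0 - a) * beta <= (u 0 j0 - a) * L j0 i.
    by apply: ler_wpM2l; rewrite ?subr_ge0.
  lra.
rewrite (row_mul_shift _ b (L1 i)) (bigD1 j0) //=.
have : \sum_(l | l != j0) (u 0 l - b) * L l i <= 0.
  rewrite -oppr_ge0 -sumrN; apply: sumr_ge0 => l _.
  rewrite -mulNr; apply: mulr_ge0 => //.
  by have /andP[_ ?] := uab l; rewrite opprB subr_ge0.
have : (b - u 0 j0) * beta <= (b - u 0 j0) * L j0 i.
  by apply: ler_wpM2l; rewrite ?subr_ge0.
lra.
Qed.

Lemma row_in_contract_iter (A : nat -> 'M[R]_N) L lam beta j0 :
  beta <= 1 ->
  (forall t, col_stochastic (A t)) -> col_stochastic L ->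
  (forall i, beta <= L j0 i) ->
  (forall t, exists2 t', (t <= t')%N & mprod A t'.+1 lam = L) ->
  forall K : nat, exists k0, forall k, (k0 <= k)%N -> forall u a b, row_in u a b ->
    exists a' b', b' - a' <= (1 - beta) ^+ K * (b - a) /\
                  row_in (u *m mprod A 0 k) a' b'.
Proof.
move=> b1 Acs Lcs Lb window; elim=> [|K IH].
  exists 0%N => k _ u a b uab; exists a, b; split; first by rewrite expr0 mul1r.
  exact: row_in_mul (col_stochastic_mprod 0 k Acs) uab.
have [k0 Hk0] := IH; have [t' t't HL] := window k0.
exists (t'.+1 + lam)%N => k Hk u a b uab.
set Psi := mprod A (t'.+1 + lam) (k - (t'.+1 + lam)).
have -> : mprod A 0 k = Psi *m L *m mprod A 0 t'.+1.
  by rewrite -HL -mprodD -(add0n t'.+1) -mprodD; congr mprod; lia.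
rewrite (mulmxA u (Psi *m L)) (mulmxA u Psi).
have uPsi : row_in (u *m Psi) a b.
  exact: row_in_mul (col_stochastic_mprod _ _ Acs) uab.
have [a' [b' [ab' uk]]] := Hk0 t'.+1 (leqW t't) _ _ _ (row_in_contract Lcs Lb uPsi).
exists a', b'; split => //; apply: (le_trans ab').
rewrite exprSr -mulrA; apply: ler_wpM2l; first by apply: exprn_ge0; lra.
by rewrite le_eqVlt; apply/orP; left; apply/eqP; ring.
Qed.

End RangeContraction.

Lemma geometric_small (R : realType) (q eps : R) :
  0 <= q < 1 -> 0 < eps -> exists k : nat, q ^+ k < eps.
Proof.
move=> /andP[q0 q1] eps0; have q1' : `|q| < 1 by rewrite ger0_norm.
have [k _ qk] := cvgr0_norm_lt _ (cvg_expr q1') _ eps0.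
by exists k; have := qk k (leqnn k); rewrite /= ger0_norm ?exprn_ge0.
Qed.

Section RatioConsensus.
Variables (R : realType) (n m : nat) (x0 : 'cV[R]_n).

Local Notation xt0 := (col_mx x0 0 : 'cV[R]_(n + m)).
Local Notation yt0 := (col_mx (const_mx 1) 0 : 'cV[R]_(n + m)).
Local Notation avg := (n%:R^-1 * \sum_(i < n) x0 i 0).

Lemma row_col_mx0 (F : 'I_(n + m) -> R) (x : 'cV[R]_n) :
  \sum_i F i * (col_mx x 0 : 'cV[R]_(n + m)) i 0 = \sum_(i < n) F (lshift m i) * x i 0.
Proof.
rewrite big_split_ord /= [X in _ + X]big1 ?addr0 => [|i _].
  by apply: eq_bigr => i _; rewrite col_mxEu.
by rewrite col_mxEd mxE mulr0.
Qed.

Lemma yt0_ge0 i : 0 <= yt0 i 0.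
Proof. by case: (split_ordP i) => k ->; rewrite ?col_mxEu ?col_mxEd mxE. Qed.

Lemma yt0_mass : \sum_i yt0 i 0 = n%:R.
Proof.
under eq_bigr do rewrite -[yt0 _ 0]mul1r.
by rewrite row_col_mx0; under eq_bigr do rewrite mxE mulr1; rewrite sumr_const card_ord.
Qed.

(* If row j of Phi restricted to the actual nodes lies in [a, b], then the
   numerator of node j deviates from avg times its denominator by at most
   (b - a) times the total deviation of the initial values; this uses that
   the deviations x0 i - avg sum to zero. *)
Lemma ratio_numerator_error (Phi : 'M[R]_(n + m)) j a b :
  (0 < n)%N -> (forall i : 'I_n, a <= Phi j (lshift m i) <= b) ->
  `|(Phi *m xt0) j 0 - avg * (Phi *m yt0) j 0| <=
    (b - a) * \sum_(i < n) `|x0 i 0 - avg|.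
Proof.
move=> n0 Phiab.
have nR : n%:R != 0 :> R by rewrite pnatr_eq0 -lt0n.
have dev0 : \sum_(i < n) (x0 i 0 - avg) = 0.
  by rewrite sumrB sumr_const card_ord -[X in _ - X]mulr_natl mulrA mulfV // mul1r subrr.
have -> : (Phi *m xt0) j 0 - avg * (Phi *m yt0) j 0 =
    \sum_(i < n) (Phi j (lshift m i) - a) * (x0 i 0 - avg).
  under [RHS]eq_bigr do rewrite mulrBl.
  rewrite sumrB -mulr_sumr dev0 mulr0 subr0 !mxE !row_col_mx0 mulr_sumr -sumrB.
  by apply: eq_bigr => i _; rewrite mxE mulrBr mulr1 mulrC [avg * _]mulrC.
apply: le_trans (ler_norm_sum _ _ _) _; rewrite [leRHS]mulr_sumr.
apply: ler_sum => i _; rewrite normrM; apply: ler_wpM2r => //.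
by have /andP[ai ib] := Phiab i; rewrite ger0_norm ?subr_ge0 // lerD2r.
Qed.

Variables (A : nat -> 'M[R]_(n + m)) (L : 'M[R]_(n + m)) (lam : nat) (beta : R).
Variable j : 'I_n.
Hypotheses (beta0 : 0 < beta) (beta1 : beta <= 1).
Hypotheses (Acs : forall t, col_stochastic (A t)) (Lcs : col_stochastic L).
Hypothesis Lb : forall i, beta <= L (lshift m j) i.
Hypothesis window : forall t, exists2 t', (t <= t')%N & mprod A t'.+1 lam = L.

Local Notation xt k := ((mprod A 0 k *m xt0) (lshift m j) 0).
Local Notation yt k := ((mprod A 0 k *m yt0) (lshift m j) 0).

Lemma n_gt0 : (0 < n)%N.
Proof. exact: leq_ltn_trans (leq0n j) (ltn_ord j). Qed.

(* Right after each occurrence of the window, node j holds at least a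
   fraction beta of the total mass n >= 1 of the denominators. *)
Lemma yt_large_infinitely_often : forall k0, exists2 k, (k0 <= k)%N & beta <= yt k.
Proof.
move=> k0; have [t' t't HL] := window k0.
exists (t'.+1 + lam)%N; first exact: leq_trans t't (ltnW (leq_addr _ _)).
rewrite -(add0n t'.+1) mprodD add0n HL -mulmxA.
set v := mprod A 0 t'.+1 *m yt0.
have v0 i : 0 <= v i 0.
  by rewrite mxE; apply: sumr_ge0 => l _; apply: mulr_ge0 => //;
    [case: (col_stochastic_mprod 0 t'.+1 Acs) | exact: yt0_ge0].
apply: le_trans (row_lb_mass Lb v0).
rewrite col_stochastic_mass ?yt0_mass; last exact: col_stochastic_mprod.
by rewrite -{1}(mulr1 beta) ler_pM2l // ler1n n_gt0.
Qed.

(* Along the times where node j's denominator is at least beta, its ratio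
   converges to the average of the initial values: choose K with
   (1 - beta) ^+ K (S + 1) < eps beta, where S is the total deviation of x0;
   after k0 steps row j of mprod A 0 k has range below (1 - beta) ^+ K on the
   actual nodes, and [ratio_numerator_error] bounds the numerator error. *)
Lemma ratio_converges eps : 0 < eps ->
  exists k0, forall k, (k0 <= k)%N -> beta <= yt k -> `|xt k / yt k - avg| < eps.
Proof.
move=> eps0; set S := \sum_(i < n) `|x0 i 0 - avg|.
have S0 : 0 <= S by apply: sumr_ge0.
have S1 : 0 < S + 1 by apply: ltr_wpDl S0 ltr01.
have q0 : 0 <= 1 - beta by rewrite subr_ge0.
have [K HK] : exists K : nat, (1 - beta) ^+ K < eps * beta / (S + 1).
  apply: geometric_small; first by rewrite q0 ltrBlDr ltrDl.
  by apply: divr_gt0 => //; apply: mulr_gt0.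
have [k0 Hk0] := row_in_contract_iter beta1 Acs Lcs Lb window K.
exists k0 => k k0k ytk; set Phi := mprod A 0 k.
have e_row : row_in (delta_mx 0 (lshift m j) : 'rV[R]_(n + m)) 0 1.
  by move=> i; rewrite mxE eqxx /=; case: (i == _); rewrite lexx ler01.
have [a' [b' [ab' Phiab]]] := Hk0 k k0k _ _ _ e_row.
have Phiab' (i : 'I_n) : a' <= Phi (lshift m j) (lshift m i) <= b'.
  by have := Phiab (lshift m i); rewrite -rowE mxE.
have yt0' : 0 < yt k by apply: lt_le_trans ytk.
have -> : xt k / yt k - avg = (xt k - avg * yt k) / yt k by rewrite mulrBl mulfK ?gt_eqF.
rewrite normrM normfV (gtr0_norm yt0') ltr_pdivrMr //.
apply: le_lt_trans (ratio_numerator_error n_gt0 Phiab') _.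
have qK0 : 0 <= (1 - beta) ^+ K by apply: exprn_ge0.
have abK : (b' - a') * S <= (1 - beta) ^+ K * S.
  by apply: ler_wpM2r => //; rewrite subr0 mulr1 in ab'.
have KS : (1 - beta) ^+ K * S <= (1 - beta) ^+ K * (S + 1).
  by apply: ler_wpM2l => //; rewrite lerDl.
have KSeps : (1 - beta) ^+ K * (S + 1) < eps * beta by rewrite -ltr_pdivlMr.
have epsy : eps * beta <= eps * yt k by apply: ler_wpM2l => //; apply: ltW.
by apply: le_lt_trans abK _; apply: le_lt_trans KS _; apply: lt_le_trans KSeps _.
Qed.

End RatioConsensus.

Local Open Scope classical_set_scope.

Section RecurrentWindows.
Variables (R : realType) (d : measure_display) (T : measurableType d).
Variable P : probability T R.
Variables (N : nat) (Xi : nat -> T -> 'M[R]_N) (X : seq 'M[R]_N).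
Variables (lam : nat) (s : seq 'M[R]_N) (pmin : R).
Hypothesis Xi_meas : forall k (M : 'M[R]_N), measurable [set w | Xi k w = M].
Hypothesis Xi_in : forall k w, Xi k w \in X.
Hypotheses (pmin0 : 0 < pmin) (pmin1 : pmin <= 1).

Definition window k : set T :=
  [set w | forall r, (r < lam)%N -> Xi (k + 1 + r)%N w = nth 0 s r].

Definition history k (h : nat -> 'M[R]_N) : set T :=
  [set w | forall t, (t <= k)%N -> Xi t w = h t].

Definition determined k (F : set T) :=
  forall w w', (forall t, (t <= k)%N -> Xi t w = Xi t w') -> F w -> F w'.

Hypothesis window_cond :
  forall k h, (pmin%:E * P (history k h) <= P (window k `&` history k h))%E.

Local Notation pr A := (fine (P A)).

Lemma prE A : measurable A -> P A = (pr A)%:E.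
Proof. by move=> mA; rewrite fineK // fin_num_measure. Qed.

Lemma prU A B : measurable A -> measurable B -> A `&` B = set0 ->
  pr (A `|` B) = pr A + pr B.
Proof. by move=> mA mB AB; rewrite measureU // fineD // fin_num_measure. Qed.

Lemma pr_le A B : measurable A -> measurable B -> A `<=` B -> pr A <= pr B.
Proof.
move=> mA mB AB; apply: fine_le; rewrite ?fin_num_measure //.
by apply: le_measure; rewrite ?inE.
Qed.

Lemma window_measurable k : measurable (window k).
Proof. by apply: bigcap_measurableType => r _; exact: Xi_meas. Qed.

Lemma cylinder_measurable i h : measurable [set w | forall t, (t < i)%N -> Xi t w = h t].
Proof. by apply: bigcap_measurableType => t _; exact: Xi_meas. Qed.

Lemma value_in_measurable j (l : seq 'M[R]_N) : measurable [set w | Xi j w \in l].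
Proof.
elim: l => [|M l IH].
  by rewrite (_ : [set w | _] = set0) //; apply/seteqP; split => w //=; rewrite in_nil.
rewrite (_ : [set w | _] = [set w | Xi j w = M] `|` [set w | Xi j w \in l]).
  exact: measurableU.
apply/seteqP; split => w /=; rewrite in_cons; first by case/orP => [/eqP|]; [left|right].
by case => [->|->]; rewrite ?eqxx ?orbT.
Qed.

(* The window bound is additive: it holds for F as soon as it holds on each
   piece of the finite partition of F by the value of Xi j. *)
Lemma window_prob_split k j F : measurable F ->
  (forall M, pmin * pr (F `&` [set w | Xi j w = M]) <=
             pr (window k `&` (F `&` [set w | Xi j w = M]))) ->
  pmin * pr F <= pr (window k `&` F).
Proof.
move=> mF Fpiece.
suff piece_list (l : seq 'M[R]_N) : uniq l ->
    pmin * pr (F `&` [set w | Xi j w \in l]) <=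
    pr (window k `&` (F `&` [set w | Xi j w \in l])).
  have := piece_list _ (undup_uniq X).
  rewrite (_ : F `&` [set w | Xi j w \in undup X] = F) //.
  by apply/seteqP; split => w; [case|move=> Fw; split => //=; rewrite mem_undup].
elim: l => [|M l IH] /=.
  rewrite (_ : [set w | Xi j w \in [::]] = set0) ?setI0 ?measure0 ?mulr0 //.
  by apply/seteqP; split => w //=; rewrite in_nil.
move=> /andP[Ml ul].
set FM := F `&` [set w | Xi j w = M]; set Fl := F `&` [set w | Xi j w \in l].
have -> : F `&` [set w | Xi j w \in M :: l] = FM `|` Fl.
  rewrite -setIUr; congr (F `&` _); apply/seteqP; split => w /=; rewrite in_cons.
    by case/orP => [/eqP ->|]; [left|right].
  by case => [->|->]; rewrite ?eqxx ?orbT.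
have disj : FM `&` Fl = set0.
  by apply/seteqP; split => w //= [[_ e] [_ i]]; move: Ml; rewrite -e i.
have mFM : measurable FM by apply: measurableI.
have mFl : measurable Fl by apply: measurableI => //; apply: value_in_measurable.
have mW := window_measurable k.
rewrite setIUr !prU //; try exact: measurableI.
- by have := Fpiece M; have := IH ul; lra.
- by rewrite setIACA disj setI0.
Qed.

(* Conditioning step for events that in addition fix Xi t for t < k + 1 - i;
   by induction on i, splitting on the value of Xi (k - i). For i = 0 such an
   event is empty or a full history cylinder, where [window_cond] applies. *)
Lemma window_prob_cylinder k i h F : measurable F -> determined k F ->
  F `<=` [set w | forall t, (t < k.+1 - i)%N -> Xi t w = h t] ->
  pmin * pr F <= pr (window k `&` F).
Proof.
elim: i h F => [|i IH] h F mF dF sF.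
  have [[w0 Fw0]|nF] := pselect (exists w, F w); last first.
    have -> : F = set0 by apply/seteqP; split => w // Fw; apply: nF; exists w.
    by rewrite setI0 measure0 mulr0.
  have -> : F = history k h.
    apply/seteqP; split => w; first by move=> /sF /= Hw t tk; apply: Hw; lia.
    move=> /= Hw; apply: (dF w0) => // t tk.
    by rewrite (sF _ Fw0 t) ?Hw //; lia.
  have mH : measurable (history k h) by exact: (cylinder_measurable k.+1 h).
  have := window_cond k h.
  by rewrite (prE mH) (prE (measurableI _ _ (window_measurable k) mH)) -EFinM lee_fin.
apply: (window_prob_split (j := (k - i)%N)) => // M.
apply: (IH (fun t => if t == (k - i)%N then M else h t)).
- by apply: measurableI.
- move=> w w' ww' [Fw Mw]; split; first exact: (dF w).
  by rewrite /= -ww' //; lia.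
- move=> w [Fw /= Mw] t tk; case: eqP => [->//|tki].
  by apply: (sF _ Fw); lia.
Qed.

Lemma window_prob k F : measurable F -> determined k F ->
  pmin * pr F <= pr (window k `&` F).
Proof.
move=> mF dF.
by apply: (window_prob_cylinder (i := k.+1) (h := fun _ => 0)) => // w _ t; lia.
Qed.

Fixpoint no_window (M t : nat) {struct M} : set T :=
  if M is M'.+1 then ~` window t `&` no_window M' (t + lam + 1)%N else setT.

Lemma no_window_measurable M t : measurable (no_window M t).
Proof.
elim: M t => [|M IH] t /=; first exact: measurableT.
exact: measurableI (measurableC (window_measurable t)) (IH _).
Qed.

Lemma no_window_prob M t F : measurable F -> determined t F ->
  pr (F `&` no_window M t) <= (1 - pmin) ^+ M * pr F.
Proof.
elim: M t F => [|M IH] t F mF dF /=; first by rewrite setIT expr0 mul1r.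
have mW := window_measurable t.
set F' := F `&` ~` window t.
have mF' : measurable F' by apply: measurableI => //; apply: measurableC.
have dF' : determined (t + lam + 1) F'.
  move=> w w' ww' [Fw nW]; split; first by apply: (dF w) => // t' ?; apply: ww'; lia.
  by move=> Ww'; apply: nW => r rl; rewrite ww'; [exact: Ww'|lia].
rewrite setIA; apply: le_trans (IH _ _ mF' dF') _.
have splitF : pr F = pr (window t `&` F) + pr F'.
  rewrite -prU //; last 2 first.
  - exact: measurableI.
  - by apply/seteqP; split => w //= [[Ww _] [_ nW]].
  by rewrite setIC -setIUr setUv setIT.
have := window_prob mF dF.
have : 0 <= (1 - pmin) ^+ M by apply: exprn_ge0; rewrite subr_ge0.
rewrite exprSr -mulrA => qM PF.
apply: ler_wpM2l => //; lra.
Qed.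

Lemma no_window_forever_null t : P (\bigcap_M no_window M t) = 0%E.
Proof.
have mA : measurable (\bigcap_M no_window M t).
  by apply: bigcapT_measurable => M; apply: no_window_measurable.
have small M : pr (\bigcap_M no_window M t) <= (1 - pmin) ^+ M.
  apply: le_trans (pr_le mA (no_window_measurable M t) _) _; first by move=> w; apply.
  have := no_window_prob M (t := t) measurableT (fun _ _ _ _ => I).
  by rewrite setTI probability_setT mulr1.
rewrite (prE mA); congr (_%:E).
apply/eqP; rewrite eq_le fine_ge0 ?measure_ge0 // andbT.
rewrite leNgt; apply/negP => pos.
have [M qM] : exists M : nat, (1 - pmin) ^+ M < pr (\bigcap_M no_window M t).
  by apply: geometric_small => //; rewrite subr_ge0 pmin1 ltrBlDr ltrDl.
by have := lt_le_trans qM (small M); rewrite ltxx.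
Qed.

(* Almost surely the window occurs after every time: the complement is a
   countable union of the null events of [no_window_forever_null]. *)
Lemma window_infinitely_often :
  exists E : set T, [/\ measurable E, P E = 1%E &
    forall w, E w -> forall t, exists2 t', (t <= t')%N & window t' w].
Proof.
have never_after t w : (forall t', (t <= t')%N -> ~ window t' w) ->
    (\bigcap_M no_window M t) w.
  move=> nW M _; elim: M t nW => [|M IH] t nW //=; split; first exact: nW.
  by apply: IH => t' ?; apply: nW; lia.
have negl t : P.-negligible [set w | forall t', (t <= t')%N -> ~ window t' w].
  exists (\bigcap_M no_window M t); split; last by move=> w; apply: never_after.
    by apply: bigcapT_measurable => M; apply: no_window_measurable.
  exact: no_window_forever_null.
have [Z [mZ PZ sZ]] := negligible_bigcup negl.
exists (~` Z); split; first exact: measurableC.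
  by rewrite probability_setC // PZ sube0.
move=> w nZ t; apply: contrapT => Hn; apply: nZ; apply: sZ.
by exists t => // t' tt' Wt; apply: Hn; exists t'.
Qed.

End RecurrentWindows.

Lemma cmin_bounds (R : realType) n (e : rel 'I_n) :
  [/\ 0 < cmin R e, cmin R e <= 1 & forall j, cmin R e <= (1 + (outdeg e j)%:R)^-1].
Proof.
have pos (i : 'I_n) : 0 < 1 + (outdeg e i)%:R :> R by apply: ltr_wpDr; rewrite ?ler0n.
have [c0 c1] : 0 < cmin R e /\ cmin R e <= 1.
  rewrite /cmin; elim/big_ind: _ => [|x y [x0 x1] [y0 y1]|i _]; first by [].
    by rewrite lt_min ge_min x0 y0 x1.
  by rewrite invr_gt0 invf_le1 // lerDl ler0n.
by split => // j; exact: bigmin_le.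
Qed.

Lemma pattern_row_lb (R : realType) n m (e : rel 'I_n) (X s : seq 'M[R]_(n + m)) :
  (forall M, M \in X -> col_stochastic M /\ entries_ok e M) ->
  all (fun M => M \in X) s ->
  (forall (j : 'I_n) (i : 'I_(n + m)), 0 < lprod s (lshift m j) i) ->
  col_stochastic (lprod s) /\
  forall (j : 'I_n) i, cmin R e ^+ size s <= lprod s (lshift m j) i.
Proof.
move=> X_ok sX L_pos; have [c0 c1 c_le] := cmin_bounds R e.
have s_lb M : M \in s -> col_stochastic M /\ entries_lb M (cmin R e).
  move=> Ms; have [Mcs Mok] := X_ok M (allP sX M Ms); split => // a b.
  by case: (Mok a b) => [->|[->|[j' ->]]]; [left|right|right; exact: c_le].
have [Lcs Llb] := entries_lb_lprod (ltW c0) s_lb; split => // j i.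
by case: (Llb (lshift m j) i) => // L0; have := L_pos j i; rewrite L0 ltxx.
Qed.

Unset Implicit Arguments. Set Strict Implicit. Set Printing Implicit Defensive.

Theorem theorem1 (R : realType) (d : measure_display) (T : measurableType d)
  (P : probability T R)
  (n : nat) (e : rel 'I_n)
  (m : nat) (* tilde n = n + m; the first n coordinates are the actual nodes *)
  (x0 : 'cV[R]_n)
  (Xi : nat -> T -> 'M[R]_(n + m))
  (X : seq 'M[R]_(n + m)) :
  simple_digraph e ->
  strongly_connected e ->
  (* Xi[k] are random: the events {Xi[k] = M} are measurable *)
  (forall k (M : 'M[R]_(n + m)), measurable [set w | Xi k w = M]) ->
  (* (A1) *)
  (forall M, M \in X -> col_stochastic M /\ entries_ok e M) ->
  (forall k w, Xi k w \in X) ->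
  (* (A2) and (A3): lam, s = [:: Xi_1; ...; Xi_lam], pmin *)
  forall (lam : nat) (s : seq 'M[R]_(n + m)) (pmin : R),
  (0 < lam)%N -> size s = lam -> all (fun M => M \in X) s -> 0 < pmin ->
  (* (A2): L = Xi_lam ... Xi_1 has positive rows for the actual nodes *)
  (forall (j : 'I_n) (i : 'I_(n + m)), 0 < lprod s (lshift m j) i) ->
  (* (A3): conditionally on any realized history Xi[0..k], the window
     Xi[k+1..k+lam] = Xi_1..Xi_lam has probability >= pmin *)
  (forall (k : nat) (h : nat -> 'M[R]_(n + m)),
     let H := [set w | forall t, (t <= k)%N -> Xi t w = h t] in
     let W := [set w | forall r, (r < lam)%N ->
                        Xi (k + 1 + r)%N w = nth 0 s r] in
     (pmin%:E * P H <= P (W `&` H))%E) ->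
  let c := cmin R e in
  let xt0 : 'cV[R]_(n + m) := col_mx x0 0 in
  let yt0 : 'cV[R]_(n + m) := col_mx (const_mx 1) 0 in
  let avg := n%:R^-1 * \sum_(i < n) x0 i 0 in
  exists E : set T, [/\ measurable E, P E = 1%E &
    forall w, E w -> forall j : 'I_n,
      let xt k := traj Xi xt0 k w (lshift m j) 0 in
      let yt k := traj Xi yt0 k w (lshift m j) 0 in
      let K := [set k | c ^+ lam <= yt k] in
      (* K_j is infinite *)
      [/\ (forall N, exists k, (N <= k)%N /\ K k) &
      (* z_j[k] -> avg as k -> oo along K_j *)
      (forall eps : R, 0 < eps -> exists N, forall k, (N <= k)%N -> K k ->
          `|xt k / yt k - avg| < eps)]].
Proof.
move=> _ _ Xi_meas X_ok Xi_in lam s pmin _ s_lam sX pmin0 L_pos cond c xt0 yt0 avg.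
(* (A3) also holds with pmin replaced by the probability min pmin 1. *)
set p := Num.min pmin 1.
have p0 : 0 < p by rewrite lt_min pmin0 ltr01.
have p1 : p <= 1 by rewrite ge_min lexx orbT.
have cond' k h :
    (p%:E * P (history Xi k h) <= P (window Xi lam s k `&` history Xi k h))%E.
  by apply: le_trans (cond k h); rewrite lee_wpmul2r // lee_fin ge_min lexx.
have [E [mE PE windowsE]] := window_infinitely_often Xi_meas Xi_in p0 p1 cond'.
exists E; split => // w Ew j.
(* On E the pattern recurs, so the deterministic analysis applies to the
   realized matrices with beta = c ^+ lam. *)
have [Lcs Llb] := pattern_row_lb X_ok sX L_pos; rewrite s_lam in Llb.
have [c0 c1 _] := cmin_bounds R e.
have Acs t : col_stochastic (Xi t w) by have [] := X_ok _ (Xi_in t w).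
have windows t : exists2 t', (t <= t')%N & mprod (Xi^~ w) t'.+1 lam = lprod s.
  have [t' tt' Wt'] := windowsE w Ew t; exists t' => //.
  rewrite -s_lam (lprod_mprod (A := Xi^~ w) (a := t'.+1)) // => r r_lam.
  by rewrite -addn1 Wt' // -s_lam.
have beta0 : 0 < c ^+ lam by apply: exprn_gt0.
have beta1 : c ^+ lam <= 1 by apply: exprn_ile1 => //; apply: ltW.
split=> [k0|eps eps0].
  have [k k0k ytk] := yt_large_infinitely_often beta0 Acs (Llb j) windows k0.
  by exists k; rewrite /= traj_mprod.
have [k0 conv] := ratio_converges x0 beta0 beta1 Acs Lcs (Llb j) windows eps0.
by exists k0 => k k0k; rewrite /= !traj_mprod; apply: conv.
Qed.
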